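(* Assume that $\widehat{\Box}$ carries a model structure $\widehat{\Box}_{\mathsf{tt}}$ whose cofibrations are the monomorphisms and whose fibrations are the maps having the right lifting property against all pushout products of $\{k\}\hookrightarrow\Box^1$ ($k=0,1$) with monomorphisms. Let $L\colon\widehat{\Delta}\to\widehat{\Box}$ be the functor $L(X)([1]^n)=\int^{[m]}X_m\times\mathbf{Poset}([1]^n,[m])$. Let $T\colon \widehat{\Box}\to\widehat{\Delta}$ be its right adjoint, $T(Y)=\int^{n}Y([1]^n)\times (\Delta^1)^n$. Then $L\dashv T$ is a Quillen adjunction from the Kan model structure $\widehat{\Delta}_{\mathsf{Kan}}$ to $\widehat{\Box}_{\mathsf{tt}}$, i.e. $L$ is left Quillen.
   Context: $\Delta$ is the simplex category and $\Box$ the full subcategory of $\mathbf{Poset}$ on $[1]^n$, $n\ge0$, where $[1]=\{0<1\}$. $\widehat{\mathcal{C}}$ denotes presheaves of sets. $\Box^1$ is the cubical set represented by $[1]$, and $\{k\}\hookrightarrow\Box^1$ for $k=0,1$ are its two point inclusions (from the terminal cubical set). The Kan model structure on simplicial sets has as cofibrations the monomorphisms and as fibrations the maps with the right lifting property against the horn inclusions $\Lambda^n_k\to\Delta^n$, $n>0$, $0\le k\le n$. The pushout product of $a\colon A\to B$ and $b\colon C\to D$ is $(A\times D)\sqcup_{A\times C}(B\times C)\to B\times D$. *)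

From Stdlib Require Import ProofIrrelevance FunctionalExtensionality
  PropExtensionality Relation_Operators.
From mathcomp Require Import all_boot.

Set Implicit Arguments.
Unset Strict Implicit.
Unset Printing Implicit Defensive.

Lemma sig_eq (A : Type) (P : A -> Prop) (x y : sig P) :
  proj1_sig x = proj1_sig y -> x = y.
Proof.
case: x => x px; case: y => y py /= e; subst y.
by rewrite (proof_irrelevance _ px py).
Qed.

Record Cat := BuildCat {
  ob : Type;
  hom : ob -> ob -> Type;
  idm : forall a, hom a a;
  cmp : forall a b c, hom b c -> hom a b -> hom a c;
  cmp_idl : forall a b (f : hom a b), cmp (idm b) f = f;
  cmp_idr : forall a b (f : hom a b), cmp f (idm a) = f;
  cmp_assoc : forall a b c d (f : hom c d) (g : hom b c) (h : hom a b),
      cmp f (cmp g h) = cmp (cmp f g) h }.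
Arguments hom {_} a b.
Arguments idm {_} a.
Arguments cmp {_ a b c} f g.

Definition mmap (A B : Type) (la : A -> A -> Prop) (lb : B -> B -> Prop) :=
  {f : A -> B | forall x y, la x y -> lb (f x) (f y)}.

Definition mcomp A B C (la : A -> A -> Prop) (lb : B -> B -> Prop)
  (lc : C -> C -> Prop) (f : mmap lb lc) (g : mmap la lb) : mmap la lc :=
  exist (fun k : A -> C => forall x y, la x y -> lc (k x) (k y))
        (fun x => proj1_sig f (proj1_sig g x))
        (fun x y h => proj2_sig f _ _ (proj2_sig g _ _ h)).

Definition mid A (la : A -> A -> Prop) : mmap la la :=
  exist (fun k : A -> A => forall x y, la x y -> la (k x) (k y))
        (fun x => x) (fun x y h => h).

Definition mono_cat (car : nat -> Type) (le : forall n, car n -> car n -> Prop)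
  : Cat.
refine (@BuildCat nat (fun m n => mmap (le m) (le n)) (fun n => mid (le n))
          (fun a b c f g => mcomp f g) _ _ _).
- by move=> a b f; apply: sig_eq.
- by move=> a b f; apply: sig_eq.
- by move=> a b c d f g h; apply: sig_eq.
Defined.

(* The simplex category: [m] = {0 < 1 < ... < m} = 'I_m.+1. *)
Definition ordle (n : nat) (i j : 'I_n.+1) : Prop := (i <= j)%N.
Definition Delta : Cat := @mono_cat (fun n => 'I_n.+1) ordle.

(* The cube category: [1]^n (product order), all monotone maps. *)
Definition cube (n : nat) := {ffun 'I_n -> bool}.
Definition cube_le (n : nat) (x y : cube n) : Prop := forall i, x i ==> y i.
Definition Box : Cat := @mono_cat cube cube_le.

Section Presheaves.
Variable C : Cat.

Record psh := BuildPsh {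
  sec :> ob C -> Type;
  act : forall a b, hom a b -> sec b -> sec a;
  act_id : forall a x, act (idm a) x = x;
  act_cmp : forall a b c (f : hom b c) (g : hom a b) x,
      act (cmp f g) x = act g (act f x) }.

Record pmor (X Y : psh) := BuildPmor {
  mapp :> forall a, X a -> Y a;
  natl : forall a b (f : hom a b) x, mapp (act f x) = act f (mapp x) }.

Definition peq (X Y : psh) (f g : pmor X Y) := forall a x, f a x = g a x.

Definition pid (X : psh) : pmor X X.
refine (@BuildPmor X X (fun a x => x) _). by [].
Defined.

Definition pcomp (X Y Z : psh) (g : pmor Y Z) (f : pmor X Y) : pmor X Z.
refine (@BuildPmor X Z (fun a x => g a (f a x)) _).
by move=> a b h x; rewrite !natl.
Defined.

Definition mono (A B : psh) (f : pmor A B) : Prop :=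
  forall (Z : psh) (g h : pmor Z A), peq (pcomp f g) (pcomp f h) -> peq g h.

Definition llp (A B X Y : psh) (i : pmor A B) (p : pmor X Y) : Prop :=
  forall (u : pmor A X) (v : pmor B Y), peq (pcomp p u) (pcomp v i) ->
  exists h : pmor B X, peq (pcomp h i) u /\ peq (pcomp p h) v.

Definition yon (c : ob C) : psh.
refine (@BuildPsh (fun a => hom a c) (fun a b f x => cmp x f) _ _).
- by move=> a x; rewrite cmp_idr.
- by move=> a b d f g x; rewrite cmp_assoc.
Defined.

Definition pterm : psh.
refine (@BuildPsh (fun _ => unit) (fun _ _ _ _ => tt) _ _).
- by move=> a [].
- by [].
Defined.

Definition subpsh (X : psh) (P : forall a, X a -> Prop)
  (HP : forall a b (f : hom a b) x, P b x -> P a (act f x)) : psh.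
refine (@BuildPsh (fun a => {x : X a | P a x})
          (fun a b f x => exist _ (act f (proj1_sig x)) (HP _ _ f _ (proj2_sig x)))
          _ _).
- by move=> a x; apply: sig_eq; rewrite /= act_id.
- by move=> a b c f g x; apply: sig_eq; rewrite /= act_cmp.
Defined.

Definition subpsh_incl X P HP : pmor (@subpsh X P HP) X.
refine (@BuildPmor (@subpsh X P HP) X (fun a x => proj1_sig x) _).
by [].
Defined.

Definition pprod (X Y : psh) : psh.
refine (@BuildPsh (fun a => (X a * Y a)%type)
          (fun a b f x => (act f x.1, act f x.2)) _ _).
- by move=> a [x y]; rewrite /= !act_id.
- by move=> a b c f g [x y]; rewrite /= !act_cmp.
Defined.

Definition pprod_map (X Y X' Y' : psh) (f : pmor X X') (g : pmor Y Y')
  : pmor (pprod X Y) (pprod X' Y').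
refine (@BuildPmor (pprod X Y) (pprod X' Y')
          (fun a x => (f a x.1, g a x.2)) _).
by move=> a b h [x y]; rewrite /= !natl.
Defined.

(* Right lifting property of p against the pushout product
     a [] b : (A x D) u_{A x C} (B x C) -> B x D,
   stated through the universal property of the pushout: a commutative
   square from the pushout corner map to p is a pair of maps
   u : A x D -> X, v : B x C -> X agreeing on A x C, together with
   w : B x D -> Y making both squares commute. *)
Definition rlp_pp (A B Cc D X Y : psh) (a : pmor A B) (b : pmor Cc D)
  (p : pmor X Y) : Prop :=
  forall (u : pmor (pprod A D) X) (v : pmor (pprod B Cc) X)
         (w : pmor (pprod B D) Y),
  peq (pcomp u (pprod_map (pid A) b)) (pcomp v (pprod_map a (pid Cc))) ->
  peq (pcomp p u) (pcomp w (pprod_map a (pid D))) ->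
  peq (pcomp p v) (pcomp w (pprod_map (pid B) b)) ->
  exists h : pmor (pprod B D) X,
    [/\ peq (pcomp h (pprod_map a (pid D))) u,
        peq (pcomp h (pprod_map (pid B) b)) v &
        peq (pcomp p h) w].

Definition mclass := forall X Y : psh, pmor X Y -> Prop.

Definition retract (A B A' B' : psh) (f : pmor A B) (g : pmor A' B') : Prop :=
  exists (i : pmor A A') (r : pmor A' A) (j : pmor B B') (s : pmor B' B),
  [/\ peq (pcomp r i) (pid A), peq (pcomp s j) (pid B),
      peq (pcomp g i) (pcomp j f) & peq (pcomp f r) (pcomp s g)].

(* A (closed) model structure on the presheaf category with cofibrations
   cof, weak equivalences W and fibrations fib.  (Presheaf categories are
   complete and cocomplete, so the (co)limit axiom is automatic.) *)
Definition model_structure (cof W fib : mclass) : Prop :=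
  [/\
      (forall X Y (f g : pmor X Y), peq f g ->
          (cof X Y f <-> cof X Y g) /\ (W X Y f <-> W X Y g)
          /\ (fib X Y f <-> fib X Y g)),
      (forall X Y Z (f : pmor X Y) (g : pmor Y Z),
          [/\ W _ _ f -> W _ _ g -> W _ _ (pcomp g f),
              W _ _ f -> W _ _ (pcomp g f) -> W _ _ g &
              W _ _ g -> W _ _ (pcomp g f) -> W _ _ f]),
      (forall A B A' B' (f : pmor A B) (g : pmor A' B'), retract f g ->
          [/\ cof _ _ g -> cof _ _ f, W _ _ g -> W _ _ f &
              fib _ _ g -> fib _ _ f]),
      (forall A B X Y (i : pmor A B) (p : pmor X Y),
          cof _ _ i -> fib _ _ p -> (W _ _ i \/ W _ _ p) -> llp i p) &
      (forall X Y (f : pmor X Y),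
          (exists Z (i : pmor X Z) (p : pmor Z Y),
              [/\ cof _ _ i, W _ _ i, fib _ _ p & peq f (pcomp p i)]) /\
          (exists Z (i : pmor X Z) (p : pmor Z Y),
              [/\ cof _ _ i, fib _ _ p, W _ _ p & peq f (pcomp p i)]))].

End Presheaves.

Arguments pmor {C} X Y.
Arguments mono {C A B} f.
Arguments llp {C A B X Y} i p.
Arguments rlp_pp {C A B Cc D X Y} a b p.
Arguments pcomp {C X Y Z} g f.
Arguments pid {C} X.
Arguments peq {C X Y} f g.
Arguments act {C} p {a b} f x.

(* Horn Lambda^n_k inside Delta^n: the simplices [m] -> [n] missing some
   vertex j <> k (i.e. lying in some face d_j, j <> k). *)
Definition in_horn (n : nat) (k : 'I_n.+1) (m : nat) (f : @hom Delta m n)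
  : Prop := exists j : 'I_n.+1, j != k /\ forall i, proj1_sig f i != j.

Lemma in_horn_act (n : nat) (k : 'I_n.+1) a b (f : @hom Delta a b)
  (x : @yon Delta n b) : in_horn k x -> in_horn k (act (@yon Delta n) f x).
Proof. by case=> j [jk hj]; exists j; split=> // i; apply: hj. Qed.

Definition horn (n : nat) (k : 'I_n.+1) : psh Delta :=
  @subpsh Delta (@yon Delta n) (@in_horn n k) (@in_horn_act n k).

Definition horn_incl (n : nat) (k : 'I_n.+1) : pmor (horn k) (@yon Delta n) :=
  @subpsh_incl Delta (@yon Delta n) (@in_horn n k) (@in_horn_act n k).

Definition kan_fib : mclass Delta := fun X Y p =>
  forall (n : nat) (k : 'I_n.+1), (0 < n)%N -> llp (horn_incl k) p.

Definition vtx (k : bool) : cube 1 := [ffun _ => k].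

Definition const_cube (n : nat) (k : bool) : @hom Box n 1 :=
  exist (fun h : cube n -> cube 1 => forall x y, cube_le x y -> cube_le (h x) (h y))
        (fun _ => vtx k) (fun _ _ _ _ => implybb _).

Definition point (k : bool) : pmor (pterm Box) (@yon Box 1).
refine (@BuildPmor Box (pterm Box) (@yon Box 1) (fun n _ => const_cube n k) _).
by move=> a b f x; apply: sig_eq.
Defined.

Definition tt_fib : mclass Box := fun X Y p =>
  forall (k : bool) (Cc D : psh Box) (m : pmor Cc D), mono m ->
    rlp_pp (point k) m p.

Section Quot.
Variables (T : Type) (R : T -> T -> Prop).
Definition cls (p : T) : T -> Prop := clos_refl_sym_trans T R p.
Definition quot := {P : T -> Prop | exists p, P = cls p}.
Definition qcl (p : T) : quot := exist _ (cls p) (ex_intro _ p erefl).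
Lemma quot_rep (c : quot) : exists p, c = qcl p.
Proof. case: c => P [p e]; exists p; subst P; exact: sig_eq. Qed.
End Quot.

Section QMap.
Variables (T T' : Type) (R : T -> T -> Prop) (R' : T' -> T' -> Prop).
Variables (h : T -> T') (hc : forall p q, R p q -> cls R' (h p) (h q)).

Lemma cls_map p q : cls R p q -> cls R' (h p) (h q).
Proof.
elim=> [x y /hc // | x | x y _ IH | x y z _ IH1 _ IH2].
- exact: rst_refl.
- exact: rst_sym.
- exact: rst_trans IH1 IH2.
Qed.

Lemma qmap_pred p0 :
  (fun q' => exists p, cls R p0 p /\ cls R' (h p) q') = cls R' (h p0).
Proof.
apply: functional_extensionality => q'; apply: propositional_extensionality.
split=> [[p [H1 H2]] | H]; first exact: rst_trans (cls_map H1) H2.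
by exists p0; split=> //; apply: rst_refl.
Qed.

Lemma qmap_ok (c : quot R) :
  exists p', (fun q' => exists p, proj1_sig c p /\ cls R' (h p) q') = cls R' p'.
Proof. case: c => P [p0 e] /=; exists (h p0); rewrite e; exact: qmap_pred. Qed.

Definition qmap (c : quot R) : quot R' := exist _ _ (qmap_ok c).

Lemma qmapE p : qmap (qcl R p) = qcl R' (h p).
Proof. by apply: sig_eq; rewrite /= qmap_pred. Qed.
End QMap.

Section Lfun.
Variable X : psh Delta.

Definition pmap (n m : nat) := mmap (@cube_le n) (@ordle m).

Definition pairs (n : nat) := {m : nat & (X m * pmap n m)%type}.

Inductive crel (n : nat) : pairs n -> pairs n -> Prop :=
| crel_step (m m' : nat) (phi : @hom Delta m m') (x : X m') (g : pmap n m) :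
    crel (existT _ m (act X phi x, g))
         (existT _ m' (x, mcomp (phi : mmap (@ordle m) (@ordle m')) g)).

Definition Lsec (n : nat) := quot (@crel n).

Definition hpre (k n : nat) (psi : @hom Box k n) (p : pairs n) : pairs k :=
  match p with existT m (x, g) =>
    existT (fun m => (X m * pmap k m)%type) m
      (x, mcomp g (psi : mmap (@cube_le k) (@cube_le n))) end.

Lemma hpre_ok k n (psi : @hom Box k n) p q :
  crel p q -> cls (@crel k) (hpre psi p) (hpre psi q).
Proof.
case=> m m' phi x g /=; apply: rst_step.
have -> : mcomp (mcomp (phi : mmap (@ordle m) (@ordle m')) g)
            (psi : mmap (@cube_le k) (@cube_le n))
          = mcomp (phi : mmap (@ordle m) (@ordle m'))
                  (mcomp g (psi : mmap (@cube_le k) (@cube_le n))).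
  exact: sig_eq.
exact: crel_step.
Qed.

Definition Lact (k n : nat) (psi : @hom Box k n) (c : Lsec n) : Lsec k :=
  qmap (@hpre_ok k n psi) c.

Lemma Lact_id n (c : Lsec n) : Lact (@idm Box n) c = c.
Proof.
have [[m [x g]] ->] := quot_rep c; rewrite /Lact qmapE /=.
by congr qcl; congr existT; congr pair; apply: sig_eq.
Qed.

Lemma Lact_cmp a b c (f : @hom Box b c) (g : @hom Box a b)
  (z : Lsec c) : Lact (cmp f g) z = Lact g (Lact f z).
Proof.
have [[m [x h]] ->] := quot_rep z; rewrite /Lact !qmapE /=.
by congr qcl; congr existT; congr pair; apply: sig_eq.
Qed.

Definition Lobj : psh Box := @BuildPsh Box Lsec Lact Lact_id Lact_cmp.
End Lfun.

Section Lmor.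
Variables (X Y : psh Delta) (F : pmor X Y).

Definition hF (n : nat) (p : pairs X n) : pairs Y n :=
  match p with existT m (x, g) =>
    existT (fun m => (Y m * pmap n m)%type) m (F m x, g) end.

Lemma hF_ok n p q : crel p q -> cls (@crel Y n) (@hF n p) (@hF n q).
Proof. by case=> m m' phi x g /=; rewrite natl; apply: rst_step; apply: crel_step. Qed.

Definition Lmap_fun (n : nat) (c : Lobj X n) : Lobj Y n := qmap (@hF_ok n) c.

Lemma Lmap_natl a b (f : @hom Box a b) (c : Lobj X b) :
  Lmap_fun (act (Lobj X) f c) = act (Lobj Y) f (Lmap_fun c).
Proof.
have [[m [x g]] ->] := quot_rep c.
by rewrite /Lmap_fun /= /Lact !qmapE.
Qed.

Definition Lmap : pmor (Lobj X) (Lobj Y) := BuildPmor Lmap_natl.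
End Lmor.

(** Every element of L(X)([1]^n) has a normal form (x, g) with
    g : [1]^n -> [k] surjective, obtained from the image factorization of g.
    Normal forms are related by steps (tau w, s) ~ (w, tau s) with tau a
    surjection of Delta; since tau has a section, such chains in L(Y) pull
    back along a monomorphism X -> Y, so L preserves monomorphisms.

    By the adjunction L -| T, L f lifts against p as soon as f lifts against
    T p, so it suffices that T sends tt-fibrations to Kan fibrations; the
    retract argument then makes L f a weak equivalence.  A horn
    Lambda^n_k -> T E amounts to a map into E from the cubical horn (the
    cubes [1]^j -> [n] missing a vertex j0 <> k).  A monotone deformation
    [1] x [n] -> [n] of the identity into a face d_j (j <> k), preserving
    every face d_j (j <> k), turns the horn filling problem into a lifting
    problem against the pushout product of {eps} -> Box^1 with the inclusion
    of the cubical horn into the cubical nerve of [n]. *)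

From Stdlib Require Import ProofIrrelevance FunctionalExtensionality
  PropExtensionality Relation_Operators ClassicalEpsilon.
From Pilot Require Import Defs.
From mathcomp Require Import all_boot.

Set Implicit Arguments.
Unset Strict Implicit.
Unset Printing Implicit Defensive.

Lemma qcl_eq T (R : T -> T -> Prop) p q : cls R p q -> qcl R p = qcl R q.
Proof.
move=> h; apply: sig_eq => /=; apply: functional_extensionality => r.
apply: propositional_extensionality; split => h'.
- exact: rst_trans (rst_sym _ _ _ _ h) h'.
- exact: rst_trans h h'.
Qed.

Lemma qcl_cls T (R : T -> T -> Prop) p q : qcl R p = qcl R q -> cls R p q.
Proof. move/(congr1 (@proj1_sig _ _)) => /= ->; exact: rst_refl. Qed.

Definition qlift (A Z : Type) (R : A -> A -> Prop) (f : A -> Z) (c : quot R) : Z :=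
  f (proj1_sig (constructive_indefinite_description _ (quot_rep c))).

Lemma qliftE (A Z : Type) (R : A -> A -> Prop) (f : A -> Z) :
  (forall p q, R p q -> f p = f q) -> forall p, qlift f (qcl R p) = f p.
Proof.
move=> hf p; rewrite /qlift; case: constructive_indefinite_description => p' /= e.
symmetry; elim: (qcl_cls e) => [x y /hf | x | x y _ -> | x y z _ -> _ ->] //.
Qed.

Lemma existT_nat_inj (P : nat -> Type) k (a b : P k) :
  existT P k a = existT P k b -> a = b.
Proof. apply: Eqdep_dec.inj_pair2_eq_dec; exact: PeanoNat.Nat.eq_dec. Qed.

Lemma pmor_ext C (X Y : psh C) (f g : pmor X Y) :
  (forall a x, f a x = g a x) -> f = g.
Proof.
case: f => f hf; case: g => g hg /= e.
have efg : f = g.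
  apply: functional_extensionality_dep => a; apply: functional_extensionality => x.
  exact: e.
by subst g; rewrite (proof_irrelevance _ hf hg).
Qed.

Lemma mono_injective C (X Y : psh C) (f : pmor X Y) :
  mono f -> forall a (x y : X a), f a x = f a y -> x = y.
Proof.
move=> hm a x y hxy.
pose gx := @BuildPmor C (yon a) X (fun b (phi : hom b a) => act X phi x)
  (fun b c psi phi => act_cmp phi psi x).
pose gy := @BuildPmor C (yon a) X (fun b (phi : hom b a) => act X phi y)
  (fun b c psi phi => act_cmp phi psi y).
have := hm _ gx gy; rewrite /peq /= => /(_ _ a (idm a)); rewrite !act_id; apply.
by move=> b phi; rewrite !natl hxy.
Qed.

Lemma injective_mono C (X Y : psh C) (f : pmor X Y) :
  (forall a (x y : X a), f a x = f a y -> x = y) -> mono f.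
Proof. by move=> hi Z g h hgh a z; apply: hi; apply: hgh. Qed.

(** * Image factorization of monotone maps [1]^j -> [m] *)

Definition pmap_comp (j a b : nat) (f : @hom Delta a b) (g : Defs.pmap j a)
  : Defs.pmap j b := mcomp (f : mmap (@ordle a) (@ordle b)) g.

Section ImageFactorization.
Variables (j m : nat) (g : Defs.pmap j m).

Definition gval (c : cube j) : nat := val (proj1_sig g c).

Definition im_seq : seq nat :=
  [seq v <- iota 0 m.+1 | v \in [seq gval c | c <- enum {ffun 'I_j -> bool}]].

Lemma im_seq_sorted : sorted ltn im_seq.
Proof. apply: sorted_filter; [exact: ltn_trans | exact: iota_ltn_sorted]. Qed.

Lemma mem_im_seq c : gval c \in im_seq.
Proof.
rewrite mem_filter mem_iota /= add0n /gval ltn_ord andbT.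
by apply: map_f; rewrite mem_enum.
Qed.

Lemma im_seq_lt v : v \in im_seq -> v < m.+1.
Proof. by rewrite mem_filter mem_iota add0n => /andP[_ /andP[]]. Qed.

Lemma im_seqP v : v \in im_seq -> exists c, v = gval c.
Proof. by rewrite mem_filter => /andP[/mapP[c _ ->] _]; exists c. Qed.

Definition im_dim := (size im_seq).-1.

Lemma size_im_seq : size im_seq = im_dim.+1.
Proof. by rewrite /im_dim prednK //; case: im_seq (mem_im_seq [ffun => false]). Qed.

Lemma im_seq_nth_lt (r : 'I_im_dim.+1) : nth 0 im_seq r < m.+1.
Proof. by apply: im_seq_lt; rewrite mem_nth // size_im_seq. Qed.

Definition im_incl_fun (r : 'I_im_dim.+1) : 'I_m.+1 := Ordinal (im_seq_nth_lt r).

Lemma im_incl_mono x y : ordle x y -> ordle (im_incl_fun x) (im_incl_fun y).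
Proof.
have Hl : sorted leq im_seq by move: im_seq_sorted; rewrite ltn_sorted_uniq_leq => /andP[].
by apply: (sorted_leq_nth leq_trans leqnn 0 Hl); rewrite inE size_im_seq.
Qed.

Definition im_incl : @hom Delta im_dim m :=
  exist (fun f : 'I_im_dim.+1 -> 'I_m.+1 => forall x y, ordle x y -> ordle (f x) (f y))
    im_incl_fun im_incl_mono.

Lemma index_im_seq_lt c : index (gval c) im_seq < im_dim.+1.
Proof. by rewrite -size_im_seq index_mem mem_im_seq. Qed.

Definition im_proj_fun (c : cube j) : 'I_im_dim.+1 := Ordinal (index_im_seq_lt c).

Lemma im_proj_mono x y : cube_le x y -> ordle (im_proj_fun x) (im_proj_fun y).
Proof.
move=> hxy; rewrite /ordle /= leqNgt; apply/negP.
move/(sorted_ltn_index ltn_trans im_seq_sorted _ _ (mem_im_seq y) (mem_im_seq x)).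
by rewrite ltnNge (proj2_sig g _ _ hxy).
Qed.

Definition im_proj : Defs.pmap j im_dim :=
  exist (fun f : cube j -> 'I_im_dim.+1 => forall x y, cube_le x y -> ordle (f x) (f y))
    im_proj_fun im_proj_mono.

Lemma im_incl_proj c : im_incl_fun (im_proj_fun c) = proj1_sig g c.
Proof. by apply: val_inj; rewrite /= nth_index // mem_im_seq. Qed.

Lemma im_factorization : pmap_comp im_incl im_proj = g.
Proof. by apply: sig_eq; apply: functional_extensionality => c /=; rewrite im_incl_proj. Qed.

Lemma im_incl_inj : injective im_incl_fun.
Proof.
move=> r1 r2 /(congr1 val) /= /eqP; rewrite nth_uniq ?size_im_seq //.
  by move/eqP/val_inj.
by move: im_seq_sorted; rewrite ltn_sorted_uniq_leq => /andP[].
Qed.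

Lemma im_incl_range r : exists c, im_incl_fun r = proj1_sig g c.
Proof.
have : nth 0 im_seq r \in im_seq by rewrite mem_nth // size_im_seq.
by case/im_seqP => c hc; exists c; apply: val_inj; rewrite /= hc.
Qed.

Lemma im_proj_surj r : exists c, im_proj_fun c = r.
Proof.
have [c hc] := im_incl_range r; exists c; apply: im_incl_inj; by rewrite im_incl_proj.
Qed.
End ImageFactorization.

Arguments im_dim {j m} g.
Arguments im_incl {j m} g.
Arguments im_incl_fun {j m} g r.
Arguments im_proj {j m} g.
Arguments im_proj_fun {j m} g c.
Arguments mem_im_seq {j m} g c.
Arguments im_incl_range {j m} g r.
Arguments im_proj_surj {j m} g r.

Lemma im_factorization_comp m m' (phi : @hom Delta m m') j (g : Defs.pmap j m) :
  exists tau : @hom Delta (im_dim g) (im_dim (pmap_comp phi g)),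
  [/\ cmp phi (im_incl g) = cmp (im_incl (pmap_comp phi g)) tau,
      im_proj (pmap_comp phi g) = pmap_comp tau (im_proj g) &
      forall r, exists r0, proj1_sig tau r0 = r].
Proof.
set g' := pmap_comp phi g.
have memg r : val (proj1_sig phi (im_incl_fun g r)) \in im_seq g'.
  have [c ->] := im_incl_range g r; exact: (mem_im_seq g' c).
have tlt r : index (val (proj1_sig phi (im_incl_fun g r))) (im_seq g') < (im_dim g').+1.
  by rewrite -size_im_seq index_mem.
pose tf r : 'I_(im_dim g').+1 := Ordinal (tlt r).
have tmono x y : ordle x y -> ordle (tf x) (tf y).
  move=> hxy; rewrite /ordle /= leqNgt; apply/negP.
  move/(sorted_ltn_index ltn_trans (im_seq_sorted g') _ _ (memg y) (memg x)).
  by rewrite ltnNge (proj2_sig phi _ _ (im_incl_mono hxy)).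
pose tau : @hom Delta (im_dim g) (im_dim g') :=
  exist (fun f : 'I_(im_dim g).+1 -> 'I_(im_dim g').+1 =>
           forall x y, ordle x y -> ordle (f x) (f y)) tf tmono.
have tf_proj c : tf (im_proj_fun g c) = im_proj_fun g' c.
  by apply: val_inj; rewrite /= im_incl_proj.
exists tau; split.
- apply: sig_eq; apply: functional_extensionality => r /=.
  by apply: ord_inj; rewrite /= nth_index ?memg.
- by apply: sig_eq; apply: functional_extensionality => c /=; rewrite tf_proj.
- by move=> r; have [c <-] := im_proj_surj g' r; exists (im_proj_fun g c); rewrite /= tf_proj.
Qed.

Lemma delta_surj_section k k' (tau : @hom Delta k k') :
  (forall r, exists r0, proj1_sig tau r0 = r) ->
  exists delta : @hom Delta k' k, forall r, proj1_sig tau (proj1_sig delta r) = r.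
Proof.
move=> surj; set t := proj1_sig tau.
pose d r' := odflt ord0 [pick r | t r == r'].
have dt r' : t (d r') = r'.
  rewrite /d; case: pickP => [r /eqP // | none].
  by have [r0 h0] := surj r'; have := none r0; rewrite /t h0 eqxx.
(* any choice of preimages is monotone, as t is *)
have dmono x y : ordle x y -> ordle (d x) (d y).
  move=> hxy; rewrite /ordle leqNgt; apply/negP => hlt.
  have := proj2_sig tau _ _ (ltnW hlt); rewrite -/t !dt => hyx.
  have exy : x = y by apply: ord_inj; apply/eqP; rewrite eqn_leq hxy hyx.
  by move: hlt; rewrite exy ltnn.
exists (exist (fun f : 'I_k'.+1 -> 'I_k.+1 => forall x y, ordle x y -> ordle (f x) (f y))
  d dmono).
exact: dt.
Qed.

(** * L preserves monomorphisms *)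

Section NormalForm.
Variables (X : psh Delta) (n : nat).

Definition normal (p : pairs X n) : pairs X n :=
  let: existT m (x, g) := p in
  existT (fun m => (X m * Defs.pmap n m)%type) (im_dim g) (act X (im_incl g) x, im_proj g).

Lemma cls_normal p : cls (@crel X n) p (normal p).
Proof.
case: p => m [x g] /=; apply: rst_sym; apply: rst_step.
by rewrite -[in X in crel _ X](im_factorization g); apply: crel_step.
Qed.

Lemma normal_crel p q : crel p q ->
  exists k k' (tau : @hom Delta k k') (w : X k') (s : Defs.pmap n k),
  [/\ normal p = existT _ k (act X tau w, s),
      normal q = existT _ k' (w, pmap_comp tau s) &
      forall r, exists r0, proj1_sig tau r0 = r].
Proof.
case=> m m' phi x g /=.
have [tau [e1 e2 tau_surj]] := im_factorization_comp phi g.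
exists (im_dim g), (im_dim (pmap_comp phi g)), tau,
  (act X (im_incl (pmap_comp phi g)) x), (im_proj g).
by split=> //; [rewrite -!act_cmp e1 | rewrite -e2].
Qed.
End NormalForm.

Section LmapInjective.
Variables (X Y : psh Delta) (F : pmor X Y).
Hypothesis F_inj : forall a (x y : X a), F a x = F a y -> x = y.

Lemma normal_hF n p : normal (hF F p) = hF F (@normal X n p).
Proof. by case: p => m [x g] /=; rewrite natl. Qed.

Lemma hF_inj n p q : hF F p = hF F q -> p = q :> pairs X n.
Proof.
case: p => m [x g]; case: q => m' [x' g'] /= e.
have em : m = m' by exact: (congr1 (@projT1 _ _) e).
by subst m'; case: (existT_nat_inj e) => /F_inj -> ->.
Qed.

Definition normal_lift n (a b : pairs Y n) :=
  forall pa, normal a = hF F pa ->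
  exists pb, normal b = hF F pb /\ cls (@crel X n) pa pb.

(* The generating step is (tau w, s) ~ (w, tau s) with tau surjective; a
   section delta of tau lets w be pulled back to X as delta x0. *)
Lemma crel_normal_lift n a b : crel a b -> normal_lift a b /\ @normal_lift n b a.
Proof.
move=> hab; have [k [k' [tau [w [s [ea eb hs]]]]]] := normal_crel hab.
have [delta hd] := delta_surj_section hs.
split.
- move=> [k0 [x0 g0]]; rewrite ea /= => e.
  have ek : k = k0 by exact: (congr1 (@projT1 _ _) e).
  subst k0; have [ex <-] := existT_nat_inj e.
  have etd : cmp tau delta = @idm Delta k'.
    by apply: sig_eq; apply: functional_extensionality => r /=; rewrite hd.
  have ew : w = F _ (act X delta x0) by rewrite natl -ex -act_cmp etd act_id.
  have hx0 : x0 = act X tau (act X delta x0) by apply: F_inj; rewrite natl -ew.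
  exists (existT _ k' (act X delta x0, pmap_comp tau s)); split.
    by rewrite eb /= ew.
  by rewrite {1}hx0; apply: rst_step; apply: crel_step.
- move=> [k0 [x1 g1]]; rewrite eb /= => e.
  have ek : k' = k0 by exact: (congr1 (@projT1 _ _) e).
  subst k0; case: (existT_nat_inj e) => ew eg; subst w g1.
  exists (existT _ k (act X tau x1, s)); split; first by rewrite ea /= natl.
  by apply: rst_sym; apply: rst_step; apply: crel_step.
Qed.

Lemma cls_normal_lift n a b : cls (@crel Y n) a b -> normal_lift a b /\ normal_lift b a.
Proof.
elim=> {a b} [a b /crel_normal_lift // | a | a b _ [h1 h2] | a b c _ [h1 h2] _ [h3 h4]].
- by split=> pa h; exists pa; split=> //; apply: rst_refl.
- by split.
split.
- move=> pa /h1 [pb [/h3 [pc [hc h2c]] hab]]; exists pc; split=> //.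
  exact: rst_trans hab h2c.
- move=> pc /h4 [pb [/h2 [pa [ha h2a]] hcb]]; exists pa; split=> //.
  exact: rst_trans hcb h2a.
Qed.

Lemma Lmap_inj n (c1 c2 : Lobj X n) : Lmap F n c1 = Lmap F n c2 -> c1 = c2.
Proof.
have [p ->] := quot_rep c1; have [q ->] := quot_rep c2.
rewrite /= /Lmap_fun !qmapE => epq; have [lift _] := cls_normal_lift (qcl_cls epq).
have [pb [e hb]] := lift _ (normal_hF p).
rewrite normal_hF in e; rewrite -(hF_inj e) in hb.
apply: qcl_eq; apply: rst_trans (cls_normal p) _; apply: rst_trans hb _.
exact: rst_sym (cls_normal q).
Qed.
End LmapInjective.

Lemma Lmap_mono (X Y : psh Delta) (f : pmor X Y) : mono f -> mono (Lmap f).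
Proof. by move=> hm; apply: injective_mono => a; apply: Lmap_inj; apply: mono_injective hm. Qed.

(** * The right adjoint T *)

(* [nerve m] is the cubical set Poset(-, [m]), i.e. L applied to Delta^m. *)
Section Nerve.
Variable m : nat.

Definition nerve_act (a b : nat) (psi : @hom Box a b) (g : Defs.pmap b m)
  : Defs.pmap a m := mcomp g (psi : mmap (@cube_le a) (@cube_le b)).

Lemma nerve_act_id a (g : Defs.pmap a m) : nerve_act (@idm Box a) g = g.
Proof. exact: sig_eq. Qed.

Lemma nerve_act_cmp a b c (f : @hom Box b c) (g : @hom Box a b) (x : Defs.pmap c m) :
  nerve_act (cmp f g) x = nerve_act g (nerve_act f x).
Proof. exact: sig_eq. Qed.

Definition nerve : psh Box :=
  @BuildPsh Box (fun a => Defs.pmap a m) nerve_act nerve_act_id nerve_act_cmp.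
End Nerve.

Definition nerve_map (m m' : nat) (phi : @hom Delta m m') : pmor (nerve m) (nerve m').
refine (@BuildPmor Box (nerve m) (nerve m') (fun a g => pmap_comp phi g) _).
by move=> a b f x; apply: sig_eq.
Defined.

Section Tobj.
Variable E : psh Box.

Definition Tact (a b : nat) (phi : @hom Delta a b) (e : pmor (nerve b) E)
  : pmor (nerve a) E := Defs.pcomp e (nerve_map phi).

Lemma Tact_id a (e : pmor (nerve a) E) : Tact (@idm Delta a) e = e.
Proof. by apply: pmor_ext => j g /=; congr (e j _); apply: sig_eq. Qed.

Lemma Tact_cmp a b c (f : @hom Delta b c) (g : @hom Delta a b) (x : pmor (nerve c) E) :
  Tact (cmp f g) x = Tact g (Tact f x).
Proof. by apply: pmor_ext => j y /=; congr (x j _); apply: sig_eq. Qed.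

Definition Tobj : psh Delta :=
  @BuildPsh Delta (fun m => pmor (nerve m) E) Tact Tact_id Tact_cmp.
End Tobj.

Definition Tmap (E B : psh Box) (p : pmor E B) : pmor (Tobj E) (Tobj B).
refine (@BuildPmor Delta (Tobj E) (Tobj B) (fun m e => Defs.pcomp p e) _).
by move=> a b f x; apply: pmor_ext.
Defined.

Section Adjunction.
Variables (X : psh Delta) (E : psh Box).

Definition adj_flat_fun (u : pmor (Lobj X) E) (m : nat) (x : X m) : pmor (nerve m) E.
refine (@BuildPmor Box (nerve m) E
  (fun j g => u j (qcl (@crel X j) (existT _ m (x, g)))) _).
by move=> a b f g; rewrite -natl /= /Lact qmapE.
Defined.

Definition adj_flat (u : pmor (Lobj X) E) : pmor X (Tobj E).
refine (@BuildPmor Delta X (Tobj E) (adj_flat_fun u) _).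
move=> a b f x; apply: pmor_ext => j g /=; congr (u j _).
by apply: qcl_eq; apply: rst_step; apply: crel_step.
Defined.

Definition adj_sharp_pair (h : pmor X (Tobj E)) (j : nat) (p : pairs X j) : E j :=
  let: existT m (y, g) := p in h m y j g.

Definition adj_sharp_fun (h : pmor X (Tobj E)) (j : nat) (c : Lobj X j) : E j :=
  qlift (@adj_sharp_pair h j) c.

Lemma adj_sharp_funE (h : pmor X (Tobj E)) j m (y : X m) g :
  adj_sharp_fun h (qcl (@crel X j) (existT _ m (y, g))) = h m y j g.
Proof. by rewrite /adj_sharp_fun qliftE // => p q [] m' m'' phi x g' /=; rewrite natl. Qed.

Definition adj_sharp (h : pmor X (Tobj E)) : pmor (Lobj X) E.
refine (@BuildPmor Box (Lobj X) E (adj_sharp_fun h) _).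
move=> a b f c; have [[m [y g]] ->] := quot_rep c.
by rewrite /= /Lact qmapE /= !adj_sharp_funE -natl.
Defined.
End Adjunction.

Lemma llp_Lmap (X Y : psh Delta) (f : pmor X Y) (E B : psh Box) (p : pmor E B) :
  llp f (Tmap p) -> llp (Lmap f) p.
Proof.
move=> hl u v huv.
have [h [h1 h2]] : exists h : pmor Y (Tobj E),
    peq (Defs.pcomp h f) (adj_flat u) /\ peq (Defs.pcomp (Tmap p) h) (adj_flat v).
  apply: hl => m x; apply: pmor_ext => j g /=.
  by move: (huv j (qcl (@crel X j) (existT _ m (x, g)))); rewrite /= /Lmap_fun qmapE.
exists (adj_sharp h); split.
- move=> j c; have [[m [x g]] ->] := quot_rep c.
  rewrite /= /Lmap_fun qmapE /= adj_sharp_funE.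
  exact: (congr1 (fun e : pmor (nerve m) E => e j g) (h1 m x)).
- move=> j c; have [[m [y g]] ->] := quot_rep c.
  rewrite /= adj_sharp_funE.
  exact: (congr1 (fun e : pmor (nerve m) B => e j g) (h2 m y)).
Qed.

(* The retract argument: factor i as a trivial cofibration followed by a
   fibration q; lifting i against q exhibits i as a retract of the former. *)
Lemma weq_of_llp_fib (cof W fib : mclass Box) (A B : psh Box) (i : pmor A B) :
  model_structure cof W fib -> cof _ _ i ->
  (forall X Y (p : pmor X Y), fib _ _ p -> llp i p) -> W _ _ i.
Proof.
case=> _ _ Hret _ Hfact hi hl.
have [[Z [j [q [cj wj fq e]]]] _] := Hfact _ _ i.
have [h [h1 h2]] : exists h : pmor B Z,
    peq (Defs.pcomp h i) j /\ peq (Defs.pcomp q h) (pid B).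
  by apply: (hl _ _ q fq) => a x /=; move: (e a x) => /= ->.
have hr : retract i j by exists (pid A), (pid A), h, q; split.
by have [_ hw _] := Hret _ _ _ _ _ _ hr; apply: hw.
Qed.

(** * T sends tt-fibrations to Kan fibrations *)

(* [r] is a monotone homotopy [1] x [n] -> [n] from the identity (at
   [~~ eps]) to a map missing some vertex j <> k (at [eps]), which preserves
   every face d_j with j <> k; i.e. a deformation of Delta^n into the horn. *)
Definition horn_retraction (n : nat) (k : 'I_n.+1)
    (r : bool -> 'I_n.+1 -> 'I_n.+1) (eps : bool) : Prop :=
  [/\ forall t t' (x x' : 'I_n.+1), (t ==> t') -> (x <= x')%N -> (r t x <= r t' x')%N,
      forall x, r (~~ eps) x = x,
      exists2 j : 'I_n.+1, j != k & forall x, r eps x != j &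
      forall t (x j : 'I_n.+1), j != k -> x != j -> r t x != j].

Lemma horn_retraction_first (n : nat) (k : 'I_n.+1) : (0 < n)%N -> k = 0 :> nat ->
  horn_retraction k (fun t x => if t then x else k) false.
Proof.
move=> n_gt0 k0; split=> //.
- by move=> [] [] x x' //= _ _; rewrite k0.
- exists ord_max; first by rewrite -(inj_eq val_inj) /= k0 -lt0n.
  by move=> x; rewrite -(inj_eq val_inj) /= k0 eq_sym -lt0n.
- by move=> [] x j // jk _; rewrite eq_sym.
Qed.

Lemma horn_retraction_inner (n : nat) (k : 'I_n.+1) : (0 < k)%N ->
  horn_retraction k (fun t x => if t && (x < k)%N then k else x) true.
Proof.
move=> k_gt0; split=> //.
- move=> [] [] x x' //= _ hxx'.
    case: ifP => h1; case: ifP => h2 //; first by rewrite leqNgt h2.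
    exact: leq_trans hxx' (ltnW h2).
  by case: ifP => // h; apply: leq_trans hxx' (ltnW h).
- exists ord0; first by rewrite -(inj_eq val_inj) /= eq_sym -lt0n.
  move=> x; rewrite -(inj_eq val_inj) /= -lt0n; case: ifP => // /negbT.
  by rewrite -leqNgt; apply: leq_trans.
- by move=> [] x j //= jk xj; case: ifP => // _; rewrite eq_sym.
Qed.

Lemma exists_horn_retraction (n : nat) (k : 'I_n.+1) : (0 < n)%N ->
  exists r eps, horn_retraction k r eps.
Proof.
move=> n_gt0; have [k0 | k_gt0] := posnP k.
- by exists (fun t (x : 'I_n.+1) => if t then x else k), false; apply: horn_retraction_first.
- by exists (fun t (x : 'I_n.+1) => if t && (x < k)%N then k else x), true; apply: horn_retraction_inner.
Qed.

Section HornLifting.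
Variables (E B : psh Box) (p : pmor E B) (n : nat) (k : 'I_n.+1).
Variables (a : pmor (horn k) (Tobj E)) (b : pmor (@yon Delta n) (Tobj B)).
Hypothesis hab : peq (Defs.pcomp (Tmap p) a) (Defs.pcomp b (horn_incl k)).

Definition misses_face j (g : Defs.pmap j n) : Prop :=
  exists j0 : 'I_n.+1, j0 != k /\ forall z, proj1_sig g z != j0.

Lemma misses_face_act j j' (f : @hom Box j j') (x : Defs.pmap j' n) :
  misses_face x -> misses_face (act (nerve n) f x).
Proof. by case=> j0 [h1 h2]; exists j0; split=> // z; apply: h2. Qed.
Arguments misses_face_act {j j'} f {x}.

Definition nerve_horn : psh Box := @subpsh Box (nerve n) misses_face (@misses_face_act).
Definition nerve_horn_incl : pmor nerve_horn (nerve n) :=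
  @subpsh_incl Box (nerve n) misses_face (@misses_face_act).

Lemma im_incl_in_horn j (g : Defs.pmap j n) : misses_face g -> in_horn k (im_incl g).
Proof.
case=> j0 [h1 h2]; exists j0; split=> // r.
by have [c hc] := im_incl_range g r; have := h2 c; rewrite -hc.
Qed.

(* [a] extended to the cubical horn: g factors through the horn simplex [im_incl g]. *)
Definition horn_val j (g : Defs.pmap j n) (hg : misses_face g) : E j :=
  a (im_dim g) (exist _ (im_incl g) (im_incl_in_horn hg)) j (im_proj g).

Lemma horn_val_eq j (g1 g2 : Defs.pmap j n) (hg1 : misses_face g1) (hg2 : misses_face g2) :
  g1 = g2 -> horn_val hg1 = horn_val hg2.
Proof. by move=> e; subst g2; rewrite (proof_irrelevance _ hg1 hg2). Qed.

Lemma a_horn_val m (s : horn k m) j (g : Defs.pmap j m)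
  (hg : misses_face (pmap_comp (proj1_sig s) g)) : a m s j g = horn_val hg.
Proof.
case: s hg => sg hs /= hg.
have [tau [e1 e2 _]] := im_factorization_comp sg g.
set s' := exist (@in_horn n k _) (im_incl (pmap_comp sg g)) (im_incl_in_horn hg).
have es : act (horn k) (im_incl g) (exist _ sg hs) = act (horn k) tau s'.
  by apply: sig_eq; exact: e1.
have act_a m0 (s0 : horn k m0) m1 (f : @hom Delta m1 m0) (g0 : Defs.pmap j m1) :
    a m1 (act (horn k) f s0) j g0 = a m0 s0 j (pmap_comp f g0) by rewrite natl.
by rewrite /horn_val -/s' e2 -act_a -es act_a im_factorization.
Qed.

Definition simplex_val : pmor (nerve n) B := b n (@idm Delta n).

Lemma b_simplex_val m (sg : @hom Delta m n) j g : b m sg j g = simplex_val j (pmap_comp sg g).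
Proof.
have e : act (@yon Delta n) sg (@idm Delta n) = sg by exact: cmp_idl.
by rewrite -{1}e natl.
Qed.

Lemma p_horn_val j g (hg : misses_face g) : p j (@horn_val j g hg) = simplex_val j g.
Proof.
set s := exist (@in_horn n k _) (im_incl g) (im_incl_in_horn hg).
have := congr1 (fun e : pmor (nerve (im_dim g)) B => e j (im_proj g)) (hab s).
rewrite /= => ->; rewrite b_simplex_val; congr (simplex_val j _); exact: im_factorization.
Qed.

Lemma horn_val_act j j' (psi : @hom Box j' j) (g : Defs.pmap j n) (hg : misses_face g)
  (hg' : misses_face (act (nerve n) psi g)) : horn_val hg' = act E psi (horn_val hg).
Proof.
rewrite /horn_val -natl.
set s := exist (@in_horn n k _) (im_incl g) (im_incl_in_horn hg).
have e : pmap_comp (proj1_sig s) (act (nerve (im_dim g)) psi (im_proj g))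
         = act (nerve n) psi g.
  by apply: sig_eq; apply: functional_extensionality => z /=; rewrite im_incl_proj.
have hg2 : misses_face (pmap_comp (proj1_sig s) (act (nerve (im_dim g)) psi (im_proj g))).
  by rewrite e.
by rewrite (a_horn_val hg2); apply: horn_val_eq.
Qed.
Arguments horn_val_act {j j'} psi {g} hg hg'.

Variables (r : bool -> 'I_n.+1 -> 'I_n.+1) (eps : bool).
Hypothesis r_retr : horn_retraction k r eps.

Definition deform_fun j (t : @hom Box j 1) (x : Defs.pmap j n) (z : cube j) : 'I_n.+1 :=
  r (proj1_sig t z ord0) (proj1_sig x z).

Lemma deform_mono j t x z z' :
  cube_le z z' -> ordle (@deform_fun j t x z) (deform_fun t x z').
Proof.
case: r_retr => r_mono _ _ _ hz; apply: r_mono.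
- exact: (proj2_sig t _ _ hz ord0).
- exact: (proj2_sig x _ _ hz).
Qed.

Definition deform j (t : @hom Box j 1) (x : Defs.pmap j n) : Defs.pmap j n :=
  exist (fun f : cube j -> 'I_n.+1 => forall x y, cube_le x y -> ordle (f x) (f y))
    (deform_fun t x) (@deform_mono j t x).

Lemma deform_act j j' (psi : @hom Box j' j) t x :
  deform (cmp t psi) (act (nerve n) psi x) = act (nerve n) psi (deform t x).
Proof. exact: sig_eq. Qed.

Lemma deform_const j e (x : Defs.pmap j n) z :
  proj1_sig (deform (const_cube j e) x) z = r e (proj1_sig x z).
Proof. by rewrite /= /deform_fun /= /vtx ffunE. Qed.

Lemma deform_id j (x : Defs.pmap j n) : deform (const_cube j (~~ eps)) x = x.
Proof.
case: r_retr => _ r_id _ _.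
by apply: sig_eq; apply: functional_extensionality => z; rewrite deform_const r_id.
Qed.

Lemma misses_face_deform_end j (x : Defs.pmap j n) :
  misses_face (deform (const_cube j eps) x).
Proof.
case: r_retr => _ _ [j1 h1 h2] _.
by exists j1; split=> // z; rewrite deform_const.
Qed.

Lemma misses_face_deform j t (c : nerve_horn j) : misses_face (deform t (proj1_sig c)).
Proof.
case: r_retr => _ _ _ r_face; case: c => x [j0 [h1 h2]].
by exists j0; split=> // z; apply: r_face => //; apply: h2.
Qed.

Definition lift_top : pmor (pprod (pterm Box) (nerve n)) E.
refine (@BuildPmor Box _ E
  (fun j (tx : pprod (pterm Box) (nerve n) j) => horn_val (misses_face_deform_end tx.2)) _).
move=> j j' psi [t x] /=.
rewrite -(horn_val_act psi (misses_face_deform_end x)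
            (misses_face_act psi (misses_face_deform_end x))).
by apply: horn_val_eq; rewrite -deform_act; congr deform; apply: sig_eq.
Defined.

Definition lift_side : pmor (pprod (@yon Box 1) nerve_horn) E.
refine (@BuildPmor Box _ E
  (fun j (tc : pprod (@yon Box 1) nerve_horn j) => horn_val (misses_face_deform tc.1 tc.2)) _).
move=> j j' psi [t c] /=.
rewrite -(horn_val_act psi (misses_face_deform t c)
            (misses_face_act psi (misses_face_deform t c))).
by apply: horn_val_eq; rewrite -deform_act.
Defined.

Definition lift_bottom : pmor (pprod (@yon Box 1) (nerve n)) B.
refine (@BuildPmor Box _ B
  (fun j (tx : pprod (@yon Box 1) (nerve n) j) => simplex_val j (deform tx.1 tx.2)) _).
by move=> j j' psi [t x] /=; rewrite -natl -deform_act.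
Defined.

Lemma nerve_lift : tt_fib p ->
  exists gam : pmor (nerve n) E,
    (forall j g (hg : misses_face g), gam j g = horn_val hg) /\
    (forall j g, p j (gam j g) = simplex_val j g).
Proof.
move=> hp.
have incl_mono : mono nerve_horn_incl by apply: injective_mono => j x y; apply: sig_eq.
have [h [h1 h2 h3]] := hp eps _ _ _ incl_mono lift_top lift_side lift_bottom
  (fun j tc => horn_val_eq _ _ erefl)
  (fun j tx => p_horn_val _) (fun j tc => p_horn_val _).
pose gf j (x : Defs.pmap j n) := h j (const_cube j (~~ eps), x).
have gf_nat j j' (f : @hom Box j j') (x : nerve n j') :
    gf j (act (nerve n) f x) = act E f (gf j' x).
  by rewrite /gf -natl /=; congr (h j (_, _)); apply: sig_eq.
exists (BuildPmor gf_nat); split.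
- move=> j g hg /=; rewrite /gf.
  have := h2 j (const_cube j (~~ eps), exist _ g hg); rewrite /= => ->.
  by apply: horn_val_eq; apply: deform_id.
- move=> j g /=; rewrite /gf.
  have := h3 j (const_cube j (~~ eps), g); rewrite /= => ->.
  by rewrite deform_id.
Qed.

Lemma horn_lift : tt_fib p ->
  exists c : pmor (@yon Delta n) (Tobj E),
    peq (Defs.pcomp c (horn_incl k)) a /\ peq (Defs.pcomp (Tmap p) c) b.
Proof.
move=> hp; have [gam [gam_horn gam_p]] := nerve_lift hp.
pose cf m (sg : @yon Delta n m) : Tobj E m := Defs.pcomp gam (nerve_map sg).
have cf_nat m m' (f : @hom Delta m m') (x : @yon Delta n m') :
    cf m (act (@yon Delta n) f x) = act (Tobj E) f (cf m' x).
  by apply: pmor_ext => j g /=; congr (gam j _); apply: sig_eq.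
exists (BuildPmor cf_nat); split.
- move=> m [sg hs]; apply: pmor_ext => j g /=.
  have hg : misses_face (pmap_comp sg g).
    by case: hs => j0 [h1 h2]; exists j0; split=> // z; apply: h2.
  by rewrite (gam_horn _ _ hg) (@a_horn_val m (exist _ sg hs) j g hg).
- by move=> m sg; apply: pmor_ext => j g /=; rewrite gam_p b_simplex_val.
Qed.
End HornLifting.

Lemma Tmap_kan_fib (E B : psh Box) (p : pmor E B) : tt_fib p -> kan_fib (Tmap p).
Proof.
move=> hp n k n_gt0 a b hab; have [r [eps hr]] := exists_horn_retraction k n_gt0.
exact: (horn_lift hab hr hp).
Qed.

Theorem mainTheorem9
  (WKan : mclass Delta) (Wtt : mclass Box)
  (HKan : model_structure (@mono Delta) WKan kan_fib)
  (Htt : model_structure (@mono Box) Wtt tt_fib) :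
  (* L preserves cofibrations *)
  (forall (X Y : psh Delta) (f : pmor X Y), mono f -> mono (Lmap f)) /\
  (* L preserves trivial cofibrations *)
  (forall (X Y : psh Delta) (f : pmor X Y),
      mono f -> WKan X Y f -> Wtt (Lobj X) (Lobj Y) (Lmap f)).
Proof.
split; first exact: Lmap_mono.
move=> X Y f f_mono f_weq.
apply: (weq_of_llp_fib Htt (Lmap_mono f_mono)) => E B p p_fib.
apply: llp_Lmap.
case: HKan => _ _ _ kan_lifting _.
by apply: kan_lifting => //; [exact: Tmap_kan_fib | left].
Qed.
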